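(* Let $\Theta$ be a set of trajectory parameters, and for each iteration $j\ge 1$ let $g^j$ be a learned residual dynamics and $\theta^j\in\Theta$ the parameter returned by Bayesian optimization at iteration $j$. Suppose: (i) $\|g^j-g^*\|_\infty\le\epsilon^j$ with $\epsilon^j\to0$ as $j\to\infty$; and (ii) for each $j$, $J_{g^j}(\theta^j)\le\min_{\theta\in\Theta}J_{g^j}(\theta)+\delta(N_{BO})$, where $\delta(N_{BO})$ is a finite suboptimality bound depending on the number $N_{BO}$ of Bayesian optimization evaluations. Suppose moreover that, for every $j$ and every $\theta\in\Theta$, $|J_{g^j}(\theta)-J_{g^*}(\theta)|\le C^j\epsilon^j$ with constants $C^j>0$ that are bounded in $j$. Then, with $J^*=\min_{\theta\in\Theta}J_{g^*}(\theta)$, \[ \limsup_{j\to\infty}J_{g^*}(\theta^j)\le J^*+\delta(N_{BO}). \]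
   Context: $g^*$ denotes the true residual vehicle dynamics (the discrepancy between the true dynamics and a known nominal vehicle model), and $g^j$ the residual dynamics learned at iteration $j$ of an iterative learning scheme. For a residual $g$ and a trajectory parameter $\theta\in\Theta$, $J_g(\theta)$ is the lap time obtained by tracking the trajectory encoded by $\theta$ with a feedback controller in a closed-loop simulation of the vehicle under the nominal dynamics plus residual $g$; thus $J_{g^*}(\theta)$ is the true lap time and $J_{g^j}(\theta)$ the lap time evaluated under the learned model. The minima over $\Theta$ are assumed to exist. The uniform bound $|J_{g^j}-J_{g^*}|\le C^j\epsilon^j$ is the paper's Proposition 1, invoked in the statement of this theorem. *)

From HB Require Import structures.
From mathcomp Require Import all_boot all_order all_algebra.
From mathcomp Require Import all_classical all_reals all_analysis.
Set Implicit Arguments. Unset Strict Implicit. Unset Printing Implicit Defensive.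
Import Order.TTheory GRing.Theory Num.Theory.
Import numFieldNormedType.Exports.
Local Open Scope ring_scope.

Definition supnorm_le (R : realType) (S : Type) (V : normedModType R)
  (g h : S -> V) (e : R) : Prop := forall x, `|g x - h x| <= e.

Definition is_argmin (R : realType) (Theta : Type) (f : Theta -> R)
  (theta_min : Theta) : Prop := forall theta, f theta_min <= f theta.

(* The learned objective J_{g^j} is uniformly within r_j := C^j eps^j of the
   true one, so a delta-suboptimal point for J_{g^j} is (delta + 2 r_j)-
   suboptimal for J_{g^*}.  Since C^j is bounded and eps^j -> 0, r_j -> 0, and
   the error term vanishes in the limit superior. *)
From HB Require Import structures.
From mathcomp Require Import all_boot all_order all_algebra.
From mathcomp Require Import all_classical all_reals all_analysis.
From mathcomp Require Import lra.
Import Order.TTheory GRing.Theory Num.Theory.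
Import numFieldNormedType.Exports.
Local Open Scope classical_set_scope.
Local Open Scope ring_scope.

Lemma subopt_uniform_approx (R : realDomainType) (T : Type) (f h : T -> R)
    (r d : R) (x y : T) :
  (forall t, `|f t - h t| <= r) -> f x <= f y + d -> h x <= h y + d + r *+ 2.
Proof.
move=> fh fxy; rewrite mulr2n.
have /andP[fhx _] : - r <= f x - h x <= r by rewrite -ler_norml.
have /andP[_ fhy] : - r <= f y - h y <= r by rewrite -ler_norml.
lra.
Qed.

Lemma cvg_bounded_mul0 (R : realFieldType) (T : Type) (F : set_system T)
    (FF : Filter F) (u v : T -> R) :
  (exists M, forall t, `|u t| <= M) -> v @ F --> 0 -> (u \* v) @ F --> 0.
Proof.
move=> [M uM] v0; apply: norm_cvg0.
apply: (@squeeze_cvgr _ _ _ _ (cst 0) (fun t => M * `|v t|)).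
- by apply: nearW => t /=; rewrite normr_ge0 normrM ler_wpM2r.
- exact: cvg_cst.
- rewrite -(mulr0 M); apply: cvgMl_tmp.
  by rewrite -(@normr0 _ R); apply: cvg_norm.
Qed.

Lemma le_limn_esup (R : realType) (u v : (\bar R)^nat) :
  (\forall n \near \oo, (u n <= v n)%E) -> (limn_esup u <= limn_esup v)%E.
Proof.
move=> [N _ uv]; rewrite !limn_esup_lim.
apply: lee_lim; [exact: is_cvg_esups | exact: is_cvg_esups |].
near=> n; apply: ge_ereal_sup => _ [k /= nk <-].
apply: le_trans (uv k _) _; first by apply: leq_trans nk; near: n; exists N.
by apply: ereal_sup_ubound; exists k.
Unshelve. all: by end_near. Qed.

Lemma limn_esup_EFin_le_cvg0 (R : realType) (u w : R^nat) (a : R) :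
  (forall n, u n <= a + w n) -> w @ \oo --> 0 ->
  (limn_esup (EFin \o u) <= a%:E)%E.
Proof.
move=> uw w0.
have aw : (fun n => (a + w n)%:E) @ \oo --> a%:E.
  apply: cvg_EFin; first exact: nearW.
  by rewrite -[X in _ --> X]addr0; apply: cvgD => //; exact: cvg_cst.
rewrite -(cvg_limn_einf_sup aw).2; apply: le_limn_esup.
by apply: nearW => n; rewrite lee_fin.
Qed.

Theorem theorem1 (R : realType) (S : Type) (V : normedModType R) (Theta : Type)
  (J : (S -> V) -> Theta -> R)
  (gstar : S -> V) (g : nat -> S -> V) (theta : nat -> Theta)
  (eps : nat -> R) (C : nat -> R) (delta : nat -> R) (N_BO : nat)
  (thmin : nat -> Theta) (thstar : Theta) :
  (forall j, is_argmin (J (g j)) (thmin j)) ->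
  is_argmin (J gstar) thstar ->
  (forall j, supnorm_le (g j) gstar (eps j)) ->
  (eps @ \oo --> (0:R)) ->
  (forall j, J (g j) (theta j) <= J (g j) (thmin j) + delta N_BO) ->
  (forall j, 0 < C j) ->
  (exists M : R, forall j, C j <= M) ->
  (forall j th, `|J (g j) th - J gstar th| <= C j * eps j) ->
  (limn_esup (fun j => (J gstar (theta j))%:E) <= (J gstar thstar + delta N_BO)%:E)%E.
Proof.
(* The sup-norm hypothesis (i) enters only through the lap-time bound of
   Proposition 1, which is assumed directly. *)
move=> thmin_min _ _ eps0 theta_subopt C_gt0 [M C_le] J_approx.
apply: (@limn_esup_EFin_le_cvg0 _ (fun j => J gstar (theta j))
          (fun j => (C j * eps j) *+ 2)).
- move=> j; apply: (@subopt_uniform_approx _ _ (J (g j))) (J_approx j) _.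
  by apply: le_trans (theta_subopt j) _; rewrite lerD2r thmin_min.
- rewrite -(mul0rn _ 2); apply: cvgMn; apply: cvg_bounded_mul0 eps0.
  by exists M => j; rewrite gtr0_norm.
Qed.
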